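(* The closure operator $\texttt{simclo}$ is compatible with $\texttt{feF}$: for every $R\subseteq\mathcal{S}_1\times\mathcal{S}_2\times\mathcal{P}(\mathcal{E}_1^\omega\times\mathcal{E}_2^\omega)$, $\texttt{simclo}(\texttt{feF}(R))\subseteq\texttt{feF}(\texttt{simclo}(R))$.
   Context: Two LTSs $\mathit{TS}_i=(\mathcal{S}_i,\mathcal{E}_i,\mathcal{I}_i,\to_i)$, where $\to_i\subseteq\mathcal{S}_i\times(\mathcal{E}_i\cup\{\emptyset\})\times\mathcal{S}_i$ and $\emptyset$ marks silent steps; $s\overset{e}{\rightsquigarrow}s'$ means $s\to^*s''\xrightarrow{e}s'$ with $\to^*$ the reflexive transitive closure of silent steps. Derivative $\Delta_{e_1,e_2}(\psi)=\{(\tau_1,\tau_2)\mid(e_1\tau_1,e_2\tau_2)\in\psi\}$. $\texttt{feF}(R)=\{(s_1,s_2,\psi)\mid\forall e_1,s_1'.\ s_1\overset{e_1}{\rightsquigarrow}_1s_1'\Rightarrow\exists e_2,s_2'.\ s_2\overset{e_2}{\rightsquigarrow}_2s_2'\wedge\Delta_{e_1,e_2}(\psi)\neq\emptyset\wedge(s_1',s_2',\Delta_{e_1,e_2}(\psi))\in R\}$. For a single LTS with states $\mathcal{S}$, $\texttt{sim}\subseteq\mathcal{S}\times\mathcal{S}$ is the greatest fixed point of $\texttt{simF}(R)=\{(q,s)\mid\forall e,q'.\ q\overset{e}{\rightsquigarrow}q'\Rightarrow\exists s'.\ s\overset{e}{\rightsquigarrow}s'\wedge(q',s')\in R\}$;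 $\texttt{sim}_i$ denotes it for $\mathit{TS}_i$. $\texttt{simclo}(H)=\{(s_1,s_2,\psi)\mid\exists s_1',s_2'.\ (s_1,s_1')\in\texttt{sim}_1\wedge(s_2',s_2)\in\texttt{sim}_2\wedge(s_1',s_2',\psi)\in H\}$. *)

From Stdlib Require Import Relations.

(* A labelled transition system: states S, events E, initial states I,
   transition relation step s l s' where l = None is the silent step
   (the paper's emptyset label) and l = Some e a visible event e. *)
Record LTS := mkLTS {
  St : Type;
  Ev : Type;
  Init : St -> Prop;
  step : St -> option Ev -> St -> Prop
}.

Definition silent_star (T : LTS) : St T -> St T -> Prop :=
  clos_refl_trans (St T) (fun s s' => step T s None s').

Definition wstep (T : LTS) (s : St T) (e : Ev T) (s' : St T) : Prop :=
  exists s'', silent_star T s s'' /\ step T s'' (Some e) s'.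

Definition stream (A : Type) := nat -> A.
Definition scons {A : Type} (a : A) (t : stream A) : stream A :=
  fun n => match n with 0 => a | S k => t k end.

Definition tset (T1 T2 : LTS) := stream (Ev T1) -> stream (Ev T2) -> Prop.

Definition deriv {T1 T2 : LTS} (e1 : Ev T1) (e2 : Ev T2) (psi : tset T1 T2)
  : tset T1 T2 := fun t1 t2 => psi (scons e1 t1) (scons e2 t2).

Definition tset_nonempty {T1 T2 : LTS} (psi : tset T1 T2) : Prop :=
  exists t1 t2, psi t1 t2.

Definition trel (T1 T2 : LTS) := St T1 -> St T2 -> tset T1 T2 -> Prop.

Definition feF (T1 T2 : LTS) (R : trel T1 T2) : trel T1 T2 :=
  fun s1 s2 psi =>
    forall e1 s1', wstep T1 s1 e1 s1' ->
      exists e2 s2', wstep T2 s2 e2 s2' /\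
        tset_nonempty (deriv e1 e2 psi) /\ R s1' s2' (deriv e1 e2 psi).

Definition simF (T : LTS) (R : St T -> St T -> Prop) : St T -> St T -> Prop :=
  fun q s => forall e q', wstep T q e q' ->
    exists s', wstep T s e s' /\ R q' s'.

(* sim = greatest fixed point of the monotone simF, i.e. (Knaster-Tarski)
   the union of all post-fixed points R subset simF(R). *)
Definition sim (T : LTS) : St T -> St T -> Prop :=
  fun q s => exists R : St T -> St T -> Prop,
    (forall x y, R x y -> simF T R x y) /\ R q s.

Definition simclo (T1 T2 : LTS) (H : trel T1 T2) : trel T1 T2 :=
  fun s1 s2 psi => exists s1' s2',
    sim T1 s1 s1' /\ sim T2 s2' s2 /\ H s1' s2' psi.


(* A weak step of s1 is copied by the simulating state s1', answered there by
   the feF-hypothesis, and the answer is copied again along s2' <= s2. *)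

Lemma sim_postfixed (T : LTS) (q s : St T) : sim T q s -> simF T (sim T) q s.
Proof.
  intros [Rsim [Rpost Hqs]] e q' Hstep.
  destruct (Rpost q s Hqs e q' Hstep) as [s' [Hstep' Hq's']].
  exists s'. split; [exact Hstep' |].
  exists Rsim. split; assumption.
Qed.

Theorem mainTheorem8 (T1 T2 : LTS) (R : trel T1 T2) :
  forall s1 s2 psi, simclo T1 T2 (feF T1 T2 R) s1 s2 psi ->
                    feF T1 T2 (simclo T1 T2 R) s1 s2 psi.
Proof.
  intros s1 s2 psi [t1 [t2 [Hsim1 [Hsim2 Hfe]]]] e1 s1' Hstep1.
  destruct (sim_postfixed T1 s1 t1 Hsim1 e1 s1' Hstep1) as [t1' [Hstep_t1 Hsim1']].
  destruct (Hfe e1 t1' Hstep_t1) as [e2 [t2' [Hstep_t2 [Hne HR]]]].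
  destruct (sim_postfixed T2 t2 s2 Hsim2 e2 t2' Hstep_t2) as [s2' [Hstep2 Hsim2']].
  exists e2, s2'. repeat split; [exact Hstep2 | exact Hne |].
  exists t1', t2'. repeat split; assumption.
Qed.
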